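(* Fix a continuous density $\rho_0$ on $[0,R)$ with mass function $m_0$, and let $p_1,p_2,p_3$ be three pairwise distinct solutions of the TOV system with this density, with central values $p_{c,i}=p_i(0)$. Then for every real $\lambda$, $$p(r)=\frac{\lambda\,p_1(r)[p_3(r)-p_2(r)]+(1-\lambda)\,p_2(r)[p_3(r)-p_1(r)]}{\lambda[p_3(r)-p_2(r)]+(1-\lambda)[p_3(r)-p_1(r)]}$$ solves the TOV system with density $\rho_0$ wherever the denominator does not vanish, and its central pressure is $$p_c=\frac{\lambda\,p_{c,1}[p_{c,3}-p_{c,2}]+(1-\lambda)\,p_{c,2}[p_{c,3}-p_{c,1}]}{\lambda[p_{c,3}-p_{c,2}]+(1-\lambda)[p_{c,3}-p_{c,1}]}.$$ *)

(* Geometrized units G = c = 1. *)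
From Stdlib Require Import Reals.
From Coquelicot Require Import Coquelicot.
Open Scope R_scope.

Definition cont_on_0R (R0 : R) (f : R -> R) : Prop :=
  forall r, 0 <= r < R0 ->
    filterlim f (within (fun x => 0 <= x < R0) (locally r)) (locally (f r)).

Definition mass (rho0 : R -> R) (r : R) : R :=
  4 * PI * RInt (fun s => rho0 s * s ^ 2) 0 r.

Definition tov_rhs (rho0 : R -> R) (r pr : R) : R :=
  - ((rho0 r + pr) * (mass rho0 r + 4 * PI * r ^ 3 * pr))
    / (r * (r - 2 * mass rho0 r)).

Definition tov_at (rho0 : R -> R) (p : R -> R) (r : R) : Prop :=
  r - 2 * mass rho0 r <> 0 /\ is_derive p r (tov_rhs rho0 r (p r)).

(* p is a solution of the TOV system with density rho0 on [0, R0):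
   continuous on [0, R0) (so p(0) is its central value) and solving the
   TOV equation at every r in (0, R0). *)
Definition tov_solution (R0 : R) (rho0 : R -> R) (p : R -> R) : Prop :=
  cont_on_0R R0 p /\ (forall r, 0 < r < R0 -> tov_at rho0 p r).

Definition superpose (lam a1 a2 a3 : R) : R :=
  (lam * a1 * (a3 - a2) + (1 - lam) * a2 * (a3 - a1))
  / (lam * (a3 - a2) + (1 - lam) * (a3 - a1)).

Definition superpose_den (lam a1 a2 a3 : R) : R :=
  lam * (a3 - a2) + (1 - lam) * (a3 - a1).

(** For a fixed radius the TOV right-hand side is a quadratic polynomial in the
    pressure, so the TOV equation is a Riccati equation.  Riccati equations have
    the classical nonlinear superposition principle: the cross ratio of any four
    solutions is constant, and solving that relation for the fourth solution
    gives exactly the one-parameter formula [superpose]. *)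

From Stdlib Require Import Reals.
From Coquelicot Require Import Coquelicot.
Open Scope R_scope.

Definition riccati (a b c x : R) : R := a + b * x + c * x ^ 2.

Lemma tov_rhs_riccati (rho0 : R -> R) (r pr : R) :
  let m := mass rho0 r in
  let d := r * (r - 2 * m) in
  tov_rhs rho0 r pr =
    riccati (- (rho0 r * m) / d) (- (m + 4 * PI * r ^ 3 * rho0 r) / d)
            (- (4 * PI * r ^ 3) / d) pr.
Proof. unfold tov_rhs, riccati, Rdiv; ring. Qed.

Lemma is_derive_superpose_riccati (a b c lam r : R) (f1 f2 f3 : R -> R) :
  is_derive f1 r (riccati a b c (f1 r)) ->
  is_derive f2 r (riccati a b c (f2 r)) ->
  is_derive f3 r (riccati a b c (f3 r)) ->
  superpose_den lam (f1 r) (f2 r) (f3 r) <> 0 ->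
  is_derive (fun t => superpose lam (f1 t) (f2 t) (f3 t)) r
            (riccati a b c (superpose lam (f1 r) (f2 r) (f3 r))).
Proof.
  intros D1 D2 D3 Hden; unfold superpose_den in Hden.
  assert (Dlin : forall (g h : R -> R) dg dh, is_derive g r dg -> is_derive h r dh ->
      is_derive (fun t => lam * g t + (1 - lam) * h t) r (lam * dg + (1 - lam) * dh)).
  { intros g h dg dh Dg Dh.
    apply (@is_derive_plus R_AbsRing R_NormedModule); now apply is_derive_scal. }
  assert (Dsub : forall (g h : R -> R) dg dh, is_derive g r dg -> is_derive h r dh ->
      is_derive (fun t => g t - h t) r (dg - dh)).
  { intros g h dg dh Dg Dh. now apply (@is_derive_minus R_AbsRing R_NormedModule). }
  assert (Dmul : forall (g h : R -> R) dg dh, is_derive g r dg -> is_derive h r dh ->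
      is_derive (fun t => g t * h t) r (dg * h r + g r * dh)).
  { intros g h dg dh Dg Dh. apply (@is_derive_mult R_AbsRing); auto.
    intros; apply Rmult_comm. }
  pose proof (Dlin _ _ _ _ (Dmul _ _ _ _ D1 (Dsub _ _ _ _ D3 D2))
                           (Dmul _ _ _ _ D2 (Dsub _ _ _ _ D3 D1))) as Dnum.
  pose proof (Dlin _ _ _ _ (Dsub _ _ _ _ D3 D2) (Dsub _ _ _ _ D3 D1)) as Dden.
  pose proof (is_derive_div _ _ r _ _ Dnum Dden Hden) as Dquot.
  cbv beta in Dquot.
  match type of Dquot with is_derive _ _ ?v => replace (riccati a b c _) with v end.
  - eapply is_derive_ext; [|exact Dquot]. intros t. unfold superpose. f_equal; ring.
  - unfold superpose, riccati. field. exact Hden.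
Qed.

Lemma tov_at_superpose (rho0 p1 p2 p3 : R -> R) (lam r : R) :
  tov_at rho0 p1 r -> tov_at rho0 p2 r -> tov_at rho0 p3 r ->
  superpose_den lam (p1 r) (p2 r) (p3 r) <> 0 ->
  tov_at rho0 (fun t => superpose lam (p1 t) (p2 t) (p3 t)) r.
Proof.
  intros [Hd D1] [_ D2] [_ D3] Hden; split; [exact Hd|].
  rewrite tov_rhs_riccati in *.
  now apply is_derive_superpose_riccati.
Qed.

Section SuperposeLimit.

Context {T : Type} {F : (T -> Prop) -> Prop} {FF : Filter F}.

Lemma filterlim_Rplus (f g : T -> R) (a b : R) :
  filterlim f F (locally a) -> filterlim g F (locally b) ->
  filterlim (fun x => f x + g x) F (locally (a + b)).
Proof.
  intros Hf Hg; eapply filterlim_comp_2; [exact Hf | exact Hg |].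
  apply (@filterlim_plus R_AbsRing R_NormedModule).
Qed.

Lemma filterlim_Rmult (f g : T -> R) (a b : R) :
  filterlim f F (locally a) -> filterlim g F (locally b) ->
  filterlim (fun x => f x * g x) F (locally (a * b)).
Proof.
  intros Hf Hg; eapply filterlim_comp_2; [exact Hf | exact Hg |].
  apply (@filterlim_mult R_AbsRing).
Qed.

Lemma filterlim_Ropp (f : T -> R) (a : R) :
  filterlim f F (locally a) -> filterlim (fun x => - f x) F (locally (- a)).
Proof.
  intros Hf; eapply filterlim_comp; [exact Hf|].
  apply (@filterlim_opp R_AbsRing R_NormedModule).
Qed.

Lemma filterlim_Rinv (f : T -> R) (a : R) :
  a <> 0 -> filterlim f F (locally a) -> filterlim (fun x => / f x) F (locally (/ a)).
Proof.
  intros Ha Hf; eapply filterlim_comp; [exact Hf|].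
  apply (filterlim_Rbar_inv (Finite a)); simpl; congruence.
Qed.

Lemma filterlim_superpose (lam a1 a2 a3 : R) (f1 f2 f3 : T -> R) :
  filterlim f1 F (locally a1) -> filterlim f2 F (locally a2) ->
  filterlim f3 F (locally a3) ->
  superpose_den lam a1 a2 a3 <> 0 ->
  filterlim (fun x => superpose lam (f1 x) (f2 x) (f3 x)) F
            (locally (superpose lam a1 a2 a3)).
Proof.
  intros L1 L2 L3 Hden; unfold superpose_den in Hden; unfold superpose.
  apply filterlim_Rmult; [| apply filterlim_Rinv; [exact Hden|]];
    repeat (apply filterlim_Rplus || apply filterlim_Rmult
            || apply filterlim_Ropp || apply filterlim_const || assumption).
Qed.

End SuperposeLimit.

Theorem mainTheorem6 (R0 : R) (rho0 p1 p2 p3 : R -> R) :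
  0 < R0 ->
  cont_on_0R R0 rho0 ->
  tov_solution R0 rho0 p1 ->
  tov_solution R0 rho0 p2 ->
  tov_solution R0 rho0 p3 ->
  (exists r, 0 <= r < R0 /\ p1 r <> p2 r) ->
  (exists r, 0 <= r < R0 /\ p1 r <> p3 r) ->
  (exists r, 0 <= r < R0 /\ p2 r <> p3 r) ->
  forall lam : R,
    let p := fun r => superpose lam (p1 r) (p2 r) (p3 r) in
    (forall r, 0 < r < R0 ->
       superpose_den lam (p1 r) (p2 r) (p3 r) <> 0 -> tov_at rho0 p r) /\
    (superpose_den lam (p1 0) (p2 0) (p3 0) <> 0 ->
       filterlim p (within (fun x => 0 <= x < R0) (locally 0)) (locally (p 0)) /\
       p 0 = (lam * p1 0 * (p3 0 - p2 0) + (1 - lam) * p2 0 * (p3 0 - p1 0))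
             / (lam * (p3 0 - p2 0) + (1 - lam) * (p3 0 - p1 0))).
Proof.
  intros HR0 _ [C1 T1] [C2 T2] [C3 T3] _ _ _ lam p; split.
  - intros r Hr.
    exact (tov_at_superpose rho0 p1 p2 p3 lam r (T1 r Hr) (T2 r Hr) (T3 r Hr)).
  - intros Hden; split; [|reflexivity].
    assert (H0 : 0 <= 0 < R0) by (split; [apply Rle_refl | exact HR0]).
    exact (filterlim_superpose lam _ _ _ p1 p2 p3 (C1 0 H0) (C2 0 H0) (C3 0 H0) Hden).
Qed.
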